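(* Let $\mathfrak{A}[\tau]$ be a topological partial *-algebra and let $x\in\mathfrak{A}$ with $x^*\in L(x)$. If $x^*x=0$, then $x\in\mathcal{R}^*(\mathfrak{A})$.
   Context: A partial *-algebra is a complex vector space $\mathfrak{A}$ with a conjugate-linear involution $x\mapsto x^*$ and a distributive partial multiplication defined on a set $\Gamma\subset\mathfrak{A}\times\mathfrak{A}$ such that $(x,y)\in\Gamma$ iff $(y^*,x^* )\in\Gamma$, in which case $(xy)^*=y^*x^*$; $L(y)=\{x:(x,y)\in\Gamma\}$, $R(y)=\{x:(y,x)\in\Gamma\}$. A topological partial *-algebra is a partial *-algebra with a Hausdorff locally convex topology $\tau$ such that for each $x$ the map $y\in R(x)\mapsto xy$ is closed (if $y_\alpha\in R(x)$, $y_\alpha\to y$, $xy_\alpha\to z$, then $y\in R(x)$, $z=xy$). For a dense subspace $\mathcal{D}$ of a Hilbert space $\mathcal{H}$, $\mathcal{L}^\dagger(\mathcal{D},\mathcal{H})$ is the set of linear operators $X$ with domain $\mathcal{D}$ and $D(X^* )\supseteq\mathcal{D}$, with $X^\dagger=X^*|_{\mathcal{D}}$ and weak product $X_1\Box X_2:=(X_1^\dagger)^*X_2$ defined when $X_2\mathcal{D}\subset D((X_1^\dagger)^* )$ and $X_1^*\mathcal{D}\subset D(X_2^* )$. A *-representation is a linear $\pi:\mathfrak{A}\to\mathcal{L}^\dagger(\mathcal{D}(\pi),\mathcal{H})$ with $\pi(x^* )=\pi(x)^\dagger$ and such that $x\in L(y)$ implies $\pi(x)\Box\pi(y)$ is defined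 and equals $\pi(xy)$; it is $(\tau,\mathsf{t}_s)$-continuous if $x\mapsto\pi(x)\xi$ is continuous from $\mathfrak{A}[\tau]$ to $\mathcal{H}$ for every $\xi\in\mathcal{D}(\pi)$. The *-radical is $\mathcal{R}^*(\mathfrak{A})=\{x:\pi(x)=0$ for all $(\tau,\mathsf{t}_s)$-continuous *-representations $\pi\}$ (equal to $\mathfrak{A}$ if there are none). *)

From HB Require Import structures.
From mathcomp Require Import all_boot all_order all_algebra.
From mathcomp Require Import all_classical all_reals all_analysis.
From mathcomp.real_closed Require Import complex.

Set Implicit Arguments.
Unset Strict Implicit.
Unset Printing Implicit Defensive.

Import Order.TTheory GRing.Theory Num.Theory.
Local Open Scope ring_scope.
Local Open Scope classical_set_scope.

Section PartialStarAlgebras.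
Context {R : realType}.
Local Notation C := (R[i]).

(* Partial *-algebras.  The partial multiplication is given by the set      *)
(* Gamma = pgamma together with a function pmul; pmul x y is only           *)
(* meaningful when pgamma x y holds (its values elsewhere are irrelevant).  *)
Record partial_star_algebra (A : lmodType C) := PartialStarAlgebra {
  pstar : A -> A;
  pgamma : A -> A -> Prop;
  pmul : A -> A -> A;
  pstarD : forall x y, pstar (x + y) = pstar x + pstar y;
  pstarZ : forall (a : C) x, pstar (a *: x) = (a^*) *: pstar x;
  pstarK : forall x, pstar (pstar x) = x;
  pgamma_star : forall x y, pgamma x y <-> pgamma (pstar y) (pstar x);
  pmul_star : forall x y, pgamma x y -> pstar (pmul x y) = pmul (pstar y) (pstar x);
  pgamma_lin : forall x y z (a b : C),
    pgamma x y -> pgamma x z -> pgamma x (a *: y + b *: z);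
  pmul_lin : forall x y z (a b : C), pgamma x y -> pgamma x z ->
    pmul x (a *: y + b *: z) = a *: pmul x y + b *: pmul x z
}.

Definition pL (A : lmodType C) (P : partial_star_algebra A) (y : A) : set A :=
  [set x | pgamma P x y].
Definition pR (A : lmodType C) (P : partial_star_algebra A) (y : A) : set A :=
  [set x | pgamma P y x].

(* A topological partial *-algebra: A carries a Hausdorff locally convex     *)
(* topology (A : tvsType C, i.e. a locally convex topological vector space  *)
(* over C, plus hausdorff_space A), and for each x the map y |-> x y,       *)
(* defined on R(x), is closed, i.e. its graph is closed in A x A.           *)
Definition topological_psa (A : tvsType C) (P : partial_star_algebra A) : Prop :=
  hausdorff_space A /\
  forall x : A, closed [set p : A * A | pR P x p.1 /\ p.2 = pmul P x p.1].

(* Complex Hilbert spaces (inner product linear in the first variable).     *)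
Record hilbert_space := HilbertSpace {
  hcarrier :> lmodType C;
  hinner : hcarrier -> hcarrier -> C;
  hinnerD : forall u v w, hinner (u + v) w = hinner u w + hinner v w;
  hinnerZ : forall (a : C) u v, hinner (a *: u) v = a * hinner u v;
  hinnerC : forall u v, hinner v u = (hinner u v)^*;
  hinner_ge0 : forall u, 0 <= hinner u u;
  hinner_eq0 : forall u, hinner u u = 0 -> u = 0;
  (* completeness for the norm ||u|| = sqrt <u,u> *)
  hcomplete : forall u : nat -> hcarrier,
    (forall e : C, 0 < e -> exists N : nat, forall n m : nat, (N <= n)%N -> (N <= m)%N ->
        hinner (u n - u m) (u n - u m) < e) ->
    exists l : hcarrier, forall e : C, 0 < e -> exists N : nat, forall n : nat, (N <= n)%N ->
        hinner (u n - l) (u n - l) < e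
}.

Section Operators.
Variable H : hilbert_space.
Local Notation "<< u , v >>" := (hinner u v).

Definition dense_subspace (D : set H) : Prop :=
  [/\ D 0,
      (forall u v, D u -> D v -> D (u + v)),
      (forall (a : C) u, D u -> D (a *: u)) &
      (forall (v : H) (e : C), 0 < e -> exists2 u, D u & << v - u, v - u >> < e)].

(* Operators with domain D are represented by functions H -> H, of which    *)
(* only the restriction to D matters.                                       *)
Definition linear_on (D : set H) (X : H -> H) : Prop :=
  forall (a : C) u v, D u -> D v -> X (a *: u + v) = a *: X u + X v.

(* zeta = X^* eta, for the operator X with domain D *)
Definition adj_rel (D : set H) (X : H -> H) (eta zeta : H) : Prop :=
  forall xi, D xi -> << X xi, eta >> = << xi, zeta >>.

Definition in_adj_dom (D : set H) (X : H -> H) (eta : H) : Prop :=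
  exists zeta, adj_rel D X eta zeta.

Definition Ldagger (D : set H) (X : H -> H) : Prop :=
  linear_on D X /\ forall eta, D eta -> in_adj_dom D X eta.

(* Y = X^dagger = X^* restricted to D *)
Definition is_dagger (D : set H) (X Y : H -> H) : Prop :=
  forall eta, D eta -> adj_rel D X eta (Y eta).

(* Given X1dag = X1^dagger: the weak product X1 [] X2 = (X1^dagger)^* X2 is *)
(* defined (X2 D in D((X1^dagger)^* ) and X1^* D in D(X2^* )) and equals Z. *)
Definition weak_prod_eq (D : set H) (X1 X1dag X2 Z : H -> H) : Prop :=
  [/\ (forall xi, D xi -> in_adj_dom D X1dag (X2 xi)),
      (forall eta, D eta -> in_adj_dom D X2 (X1dag eta)) &
      (forall xi, D xi -> adj_rel D X1dag (X2 xi) (Z xi))].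

End Operators.

Definition star_rep (A : lmodType C) (P : partial_star_algebra A)
    (H : hilbert_space) (D : set H) (pi : A -> H -> H) : Prop :=
  [/\ dense_subspace D,
      (forall (a : C) x y xi, D xi -> pi (a *: x + y) xi = a *: pi x xi + pi y xi),
      (forall x, Ldagger D (pi x)),
      (forall x, is_dagger D (pi x) (pi (pstar P x))) &
      (forall x y, pL P y x ->
         weak_prod_eq D (pi x) (pi (pstar P x)) (pi y) (pi (pmul P x y)))].

Definition rep_continuous (A : tvsType C) (H : hilbert_space) (D : set H)
    (pi : A -> H -> H) : Prop :=
  forall xi, D xi -> forall (x0 : A) (e : C), 0 < e ->
    \forall x \near x0,
      hinner (pi x xi - pi x0 xi) (pi x xi - pi x0 xi) < e.

(* The *-radical: elements annihilated by every (tau,t_s)-continuous        *)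
(* *-representation (all of A if there is none).                            *)
Definition star_radical (A : tvsType C) (P : partial_star_algebra A) : set A :=
  [set x | forall (H : hilbert_space) (D : set H) (pi : A -> H -> H),
     star_rep P D pi -> rep_continuous D pi -> forall xi, D xi -> pi x xi = 0].

End PartialStarAlgebras.

From HB Require Import structures.
From mathcomp Require Import all_boot all_order all_algebra.
From mathcomp Require Import all_classical all_reals all_analysis.
From mathcomp.real_closed Require Import complex.
Import GRing.Theory Num.Theory.
Local Open Scope ring_scope.
Local Open Scope classical_set_scope.

Set Implicit Arguments.
Unset Strict Implicit.

(* For every *-representation pi and xi in its domain, the weak product gives
   <pi(x) xi, pi(x) xi> = <xi, pi(x^* x) xi> = 0, so pi(x) xi = 0. Neither the
   topology nor the continuity of pi plays a role. *)

Section StarRepresentations.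
Variable R : realType.

Lemma hinner0l (H : @hilbert_space R) (v : H) : hinner 0 v = 0.
Proof. by rewrite -(scale0r (0 : H)) hinnerZ mul0r. Qed.

Lemma hinner0r (H : @hilbert_space R) (v : H) : hinner v 0 = 0.
Proof. by rewrite hinnerC hinner0l conjC0. Qed.

Variables (A : lmodType R[i]) (P : partial_star_algebra A).
Variables (H : @hilbert_space R) (D : set H) (pi : A -> H -> H).
Hypothesis pi_rep : star_rep P D pi.

Lemma star_rep0 xi : D xi -> pi 0 xi = 0.
Proof.
move=> Dxi; have [_ pi_lin _ _ _] := pi_rep.
by have := pi_lin (-1) 0 0 xi Dxi; rewrite scaler0 addr0 scaleN1r addNr.
Qed.

Lemma star_rep_hinner_mul x xi : pL P x (pstar P x) -> D xi ->
  hinner (pi x xi) (pi x xi) = hinner xi (pi (pmul P (pstar P x) x) xi).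
Proof.
move=> xsx_def Dxi; have [_ _ _ _ pi_mul] := pi_rep.
have [_ _ adj_prod] := pi_mul _ _ xsx_def.
by have := adj_prod xi Dxi xi Dxi; rewrite pstarK.
Qed.

Lemma star_rep_annihilates x xi : pL P x (pstar P x) ->
  pmul P (pstar P x) x = 0 -> D xi -> pi x xi = 0.
Proof.
move=> xsx_def xsx0 Dxi; apply: hinner_eq0.
by rewrite star_rep_hinner_mul // xsx0 star_rep0 // hinner0r.
Qed.

End StarRepresentations.

Theorem proposition3p3 (R : realType) (A : tvsType R[i])
    (P : partial_star_algebra A) (x : A) :
  topological_psa P ->
  pL P x (pstar P x) ->
  pmul P (pstar P x) x = 0 ->
  star_radical P x.
Proof.
move=> _ xsx_def xsx0 H D pi pi_rep _ xi Dxi.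
exact: (star_rep_annihilates pi_rep xsx_def xsx0 Dxi).
Qed.
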